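(* Let $IS\in\{\Box,\blacksquare\}^2$ and let $\tau$ be a correct compositional translation from $\mathrm{SYNCSIMPLE}$ into $\mathrm{LOCKSIMPLE}_{2,IS}$. Then $\tau$ does not have blocking type $(P_1P_1,P_1)$, nor $(P_1,P_1P_1)$, nor $(P_1,P_1)$.
   Context: $\mathrm{SYNCSIMPLE}$: subprocesses $\mathcal{U} ::= \checkmark \mid 0 \mid\, !\mathcal{U} \mid\, ?\mathcal{U}$; processes are finite parallel compositions ($\mid$ associative, commutative, $0$ a unit). Reduction: $!\mathcal{U}_1\mid ?\mathcal{U}_2\mid \mathcal{P}\to \mathcal{U}_1\mid\mathcal{U}_2\mid\mathcal{P}$. Successful: of form $\checkmark\mid\mathcal{P}$; may-convergent: reduces to a successful process; must-convergent: every reachable process is may-convergent. $\mathrm{LOCKSIMPLE}_{k,IS}$ ($IS\in\{\Box,\blacksquare\}^k$, $\Box$ empty, $\blacksquare$ full): subprocesses are words over $\{P_1,T_1,\dots,P_k,T_k\}$ followed by $0$ or $\checkmark$; states $(\mathcal{P},C)$ reduce by $(P_i\mathcal{U}\mid\mathcal{P},C)\to(\mathcal{U}\mid\mathcal{P},C[C_i:=\blacksquare])$ only if $C_i=\Box$, and $(T_i\mathcal{U}\mid\mathcal{P},C)\to(\mathcal{U}\mid\mathcal{P},C[C_i:=\Box])$ always. Success = process contains $\checkmark$; a process $\mathcal{P}$ is may/must-convergent iff the state $(\mathcal{P},IS)$ is. A compositional translation $\tau$ is given by words $\tau(!),\tau(?)$ with $\tau(0)=0$, $\tau(\checkmark)=\checkmark$,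 $\tau(!\mathcal{U})=\tau(!)\tau(\mathcal{U})$, $\tau(?\mathcal{U})=\tau(?)\tau(\mathcal{U})$, $\tau$ commuting with $\mid$; correct = preserves and reflects may- and must-convergence. Blocking type: for a word $S$, run $S$ as a single subprocess from $IS$; if it gets stuck at an occurrence of $P_i$, that occurrence ends the blocking prefix; if it is the first symbol from $\{P_i,T_i\}$ in $S$ the blocking type is $P_i$, otherwise the blocking prefix has form $R_1P_iR_2P_i$ with $R_2$ containing no $P_i,T_i$, and the blocking type is $P_iP_i$. $\tau$ has blocking type $(W_1,W_2)$ if $\tau(!)$ has type $W_1$ and $\tau(?)$ type $W_2$. *)

From Stdlib Require Import List Permutation Relations.
From mathcomp Require Import all_boot.
Set Implicit Arguments.
Unset Strict Implicit.
Unset Printing Implicit Defensive.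

Inductive ssub : Type :=
| SOk : ssub
| SNil : ssub
| SOut : ssub -> ssub
| SIn : ssub -> ssub.

(* processes: finite parallel compositions, as lists (| is AC, up to
   permutation; 0 as unit is harmless since 0-components are inert) *)
Definition sproc := list ssub.

Definition sstep (P Q : sproc) : Prop :=
  exists u1 u2 R, Permutation P (SOut u1 :: SIn u2 :: R) /\ Q = u1 :: u2 :: R.

Definition sreach := clos_refl_trans sproc sstep.

Definition ssuccessful (P : sproc) : Prop := In SOk P.

Definition smay (P : sproc) : Prop := exists Q, sreach P Q /\ ssuccessful Q.
Definition smust (P : sproc) : Prop := forall Q, sreach P Q -> smay Q.

(* lock index i : 'I_k stands for the paper's index i+1 *)
Inductive lsym (k : nat) : Type :=
| LP : 'I_k -> lsym k
| LT : 'I_k -> lsym k.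

Definition lsym_idx k (a : lsym k) : 'I_k :=
  match a with LP i => i | LT i => i end.

Inductive lsub (k : nat) : Type :=
| LOk : lsub k
| LNil : lsub k
| LPre : lsym k -> lsub k -> lsub k.

Definition lproc k := list (lsub k).

(* lock states: true = full (black square), false = empty (white square) *)
Definition lstate k := 'I_k -> bool.

Definition upd k (C : lstate k) (i : 'I_k) (b : bool) : lstate k :=
  fun j => if j == i then b else C j.

Definition lstep k (s t : lproc k * lstate k) : Prop :=
  let (P, C) := s in let (Q, C') := t in
  exists a u R, Permutation P (LPre a u :: R) /\ Q = u :: R /\
    match a with
    | LP i => C i = false /\ C' = upd C i true
    | LT i => C' = upd C i false
    end.

Definition lreach k := clos_refl_trans (lproc k * lstate k) (@lstep k).

Definition lsuccessful k (s : lproc k * lstate k) : Prop := In (LOk k) s.1.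

Definition lmay_state k (s : lproc k * lstate k) : Prop :=
  exists t, lreach s t /\ lsuccessful t.
Definition lmust_state k (s : lproc k * lstate k) : Prop :=
  forall t, lreach s t -> lmay_state t.

Definition lmay k (IS : lstate k) (P : lproc k) := lmay_state (P, IS).
Definition lmust k (IS : lstate k) (P : lproc k) := lmust_state (P, IS).

Fixpoint prepend k (w : list (lsym k)) (u : lsub k) : lsub k :=
  match w with nil => u | a :: w' => LPre a (prepend w' u) end.

Fixpoint tau_sub k (wout win : list (lsym k)) (u : ssub) : lsub k :=
  match u with
  | SOk => LOk k
  | SNil => LNil k
  | SOut u' => prepend wout (tau_sub wout win u')
  | SIn u' => prepend win (tau_sub wout win u')
  end.

Definition tau k (wout win : list (lsym k)) (P : sproc) : lproc k :=
  map (tau_sub wout win) P.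

Definition correct k (IS : lstate k) (wout win : list (lsym k)) : Prop :=
  forall P : sproc,
    (smay P <-> lmay IS (tau wout win P)) /\
    (smust P <-> lmust IS (tau wout win P)).

Inductive btype (k : nat) : Type :=
| BP : 'I_k -> btype k
| BPP : 'I_k -> btype k.

(* run a word as a single subprocess from lock state C; if it gets stuck at
   an occurrence of P_i, return the prefix before that occurrence and i *)
Fixpoint block k (C : lstate k) (S : list (lsym k))
  : option (list (lsym k) * 'I_k) :=
  match S with
  | nil => None
  | LP i :: S' =>
      if C i then Some (nil, i)
      else option_map (fun r => (LP i :: r.1, r.2)) (block (upd C i true) S')
  | LT i :: S' =>
      option_map (fun r => (LT i :: r.1, r.2)) (block (upd C i false) S')
  end.

Definition blocking_type k (IS : lstate k) (S : list (lsym k))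
  : option (btype k) :=
  match block IS S with
  | None => None
  | Some (pre, i) =>
      if has (fun a => lsym_idx a == i) pre then Some (BPP i) else Some (BP i)
  end.

Definition has_blocking_type k (IS : lstate k) (wout win : list (lsym k))
  (W1 W2 : btype k) : Prop :=
  blocking_type IS wout = Some W1 /\ blocking_type IS win = Some W2.

(* The SYNCSIMPLE process !✓ | ?0 is must-convergent, so a correct translation
   makes tau(!)✓ | tau(?)0 must-convergent as well. Suppose both words block at
   P_j and one of them, say tau(?), has blocking type P_j, i.e. its blocking
   prefix never mentions lock j. Running tau(!) up to its blocking P_j leaves
   lock j full; running tau(?) from there, it gets stuck at that P_j or earlier,
   without ever releasing lock j. Both components now wait on full locks and no
   ✓ is exposed, so this reachable state is not may-convergent. *)
From Stdlib Require Import List Permutation Relations.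
From mathcomp Require Import all_boot.
Set Implicit Arguments.
Unset Strict Implicit.

Fixpoint run_locks k (C : lstate k) (w : list (lsym k)) : lstate k :=
  match w with
  | nil => C
  | LP i :: w' => run_locks (upd C i true) w'
  | LT i :: w' => run_locks (upd C i false) w'
  end.

Definition touches k (j : 'I_k) (w : list (lsym k)) : bool :=
  has (fun a => lsym_idx a == j) w.

Lemma prepend_cat k (w1 w2 : list (lsym k)) u :
  prepend (w1 ++ w2) u = prepend w1 (prepend w2 u).
Proof. by elim: w1 => //= a w1 ->. Qed.

Lemma run_locks_untouched k (j : 'I_k) (w : list (lsym k)) C :
  ~~ touches j w -> run_locks C w j = C j.
Proof.
elim: w C => [|a w IH] C //=; rewrite negb_or => /andP[aj wj].
by case: a aj => i /= ij; rewrite IH // /upd eq_sym (negbTE ij).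
Qed.

Lemma block_Some k (C : lstate k) w pre i : block C w = Some (pre, i) ->
  exists rest, [/\ w = pre ++ LP i :: rest, block C pre = None
                 & run_locks C pre i = true].
Proof.
elim: w C pre i => [|a w IH] C pre i //=.
case: a => j; last first.
  case Bw: block => [[pre' i']|] //= [<- <-].
  by have [rest [-> /= -> ->]] := IH _ _ _ Bw; exists rest.
case: ifP => [Cj [<- <-]|Cj]; first by exists w.
case Bw: block => [[pre' i']|] //= [<- <-].
by have [rest [-> /= -> ->]] := IH _ _ _ Bw; rewrite Cj; exists rest.
Qed.

(* [block C w = None] says that all of [w] can be executed from [C]; the final
   process is only known up to permutation because [lstep] reorders components. *)
Lemma lreach_run k (C : lstate k) w u R P :
  block C w = None -> Permutation P (prepend w u :: R) ->
  exists2 Q, lreach (P, C) (Q, run_locks C w) & Permutation Q (u :: R).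
Proof.
elim: w C P => [|a w IH] C P /=; first by exists P => //; apply: rt_refl.
set C' := match a with LP i => upd C i true | LT i => upd C i false end.
have step : lstep (P, C) (prepend w u :: R, C') -> block C' w = None ->
    exists2 Q, lreach (P, C) (Q, run_locks C' w) & Permutation Q (u :: R).
  move=> PC' /(IH _ _)/(_ (Permutation_refl _))[Q reachQ QR].
  by exists Q => //; apply: rt_trans reachQ; apply: rt_step.
case: a @C' step => i /= step + PR.
  case: ifP => // Ci; case Bw: block => // _.
  by apply: step => //; exists (LP i), (prepend w u), R.
case Bw: block => // _.
by apply: step => //; exists (LT i), (prepend w u), R.
Qed.

Lemma block_before_full k (j : 'I_k) (C : lstate k) pre rest :
  ~~ touches j pre -> C j = true ->
  exists pre' i, block C (pre ++ LP j :: rest) = Some (pre', i) /\ ~~ touches j pre'.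
Proof.
elim: pre C => [|a pre IH] C /=; first by move=> _ ->; exists nil, j.
rewrite negb_or => /andP[aj prej] Cj.
have Cj' b : upd C (lsym_idx a) b j = true by rewrite /upd eq_sym (negbTE aj).
case: a aj Cj' => i /= ij Cj'; last first.
  have [pre' [i' [-> pre'j]]] := IH _ prej (Cj' false).
  by exists (LT i :: pre'), i'; rewrite /touches /= negb_or ij.
case: (C i); first by exists nil, i.
have [pre' [i' [-> pre'j]]] := IH _ prej (Cj' true).
by exists (LP i :: pre'), i'; rewrite /touches /= negb_or ij.
Qed.

Definition blocked k (C : lstate k) (x : lsub k) : Prop :=
  exists i v, x = LPre (LP i) v /\ C i = true.

Lemma blocked_not_lmay k (C : lstate k) Q :
  (forall x, In x Q -> blocked C x) -> ~ lmay_state (Q, C).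
Proof.
move=> Qblocked [t [reach_t success_t]].
case: (clos_rt_rt1n _ _ _ _ reach_t) success_t =>
    [|[Q' C'] t' [a [u [R [QR [_ stepa]]]]] _] success.
  by have [i [v []]] := Qblocked _ success.
have [i [v [[aE _] Ci]]] := Qblocked _ (Permutation_in _ (Permutation_sym QR) (in_eq _ _)).
by move: stepa; rewrite aE Ci => -[].
Qed.

Lemma blocking_deadlock k (C : lstate k) (j : 'I_k) w1 w2 pre1 pre2 u1 u2 P :
  block C w1 = Some (pre1, j) -> block C w2 = Some (pre2, j) -> ~~ touches j pre2 ->
  Permutation P [:: prepend w1 u1; prepend w2 u2] -> ~ lmust_state (P, C).
Proof.
move=> B1 B2 pre2j P12 must.
have [rest1 [w1E run1 full1]] := block_Some B1.
set v1 := prepend (LP j :: rest1) u1.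
have [Q1 reach1 Q1E] : exists2 Q1, lreach (P, C) (Q1, run_locks C pre1)
    & Permutation Q1 [:: v1; prepend w2 u2].
  by apply: lreach_run run1 _; rewrite -prepend_cat -w1E.
have [rest2 [w2E _ _]] := block_Some B2.
have [pre' [i [B2' pre'j]]] := block_before_full rest2 pre2j full1.
rewrite -w2E in B2'.
have [rest' [w2E' run2 full2]] := block_Some B2'.
have [Q2 reach2 Q2E] : exists2 Q2, lreach (Q1, run_locks C pre1)
    (Q2, run_locks (run_locks C pre1) pre') & Permutation Q2 [:: prepend (LP i :: rest') u2; v1].
  apply: lreach_run run2 _; rewrite -prepend_cat -w2E'.
  by apply: (Permutation_trans Q1E); apply: perm_swap.
apply: (blocked_not_lmay (Q := Q2) (C := run_locks (run_locks C pre1) pre')).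
  move=> x /(Permutation_in _ Q2E) [<-|[<-|[]]].
    by exists i, (prepend rest' u2).
  by exists j, (prepend rest1 u1); rewrite run_locks_untouched.
by apply: must; apply: rt_trans reach1 reach2.
Qed.

Lemma sstep_successful P Q : sstep P Q -> ssuccessful P -> ssuccessful Q.
Proof.
move=> [u1 [u2 [R [PR ->]]]] /(Permutation_in _ PR).
by case=> [//|[//|okR]]; right; right.
Qed.

Lemma smust_out_ok_in_nil : smust [:: SOut SOk; SIn SNil].
Proof.
set init := [:: SOut SOk; SIn SNil].
have init_successor Q : sstep init Q -> ssuccessful Q.
  move=> [u1 [u2 [R [PR ->]]]].
  by case: (Permutation_in _ (Permutation_sym PR) (in_eq _ _)) => [[<-]|[//|[]]]; left.
have reach_inv P Q : sreach P Q -> P = init \/ ssuccessful P -> Q = init \/ ssuccessful Q.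
  elim=> {P Q} [P Q stepPQ [Pinit|okP]|//|P P' Q _ IH1 _ IH2 /IH1/IH2//]; right.
    by apply: init_successor; rewrite -Pinit.
  exact: sstep_successful stepPQ okP.
move=> Q /reach_inv/(_ (or_introl erefl))[->|okQ]; last by exists Q; split=> //; apply: rt_refl.
exists [:: SOk; SNil]; split; last by left.
by apply: rt_step; exists SOk, SNil, nil.
Qed.

Definition btype_idx k (b : btype k) : 'I_k := match b with BP i | BPP i => i end.

Lemma blocking_type_block k (C : lstate k) w b :
  blocking_type C w = Some b -> exists pre, block C w = Some (pre, btype_idx b).
Proof.
rewrite /blocking_type; case: block => [[pre i]|] //.
by case: ifP => _ [<-]; exists pre.
Qed.

Lemma blocking_type_BP k (C : lstate k) w j : blocking_type C w = Some (BP j) ->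
  exists pre, block C w = Some (pre, j) /\ ~~ touches j pre.
Proof.
rewrite /blocking_type; case: block => [[pre i]|] //.
by case: ifP => // pre_i [<-]; exists pre; rewrite /touches pre_i.
Qed.

Lemma correct_lmust_out_in k (IS : lstate k) wout win : correct IS wout win ->
  lmust_state ([:: prepend wout (LOk k); prepend win (LNil k)], IS).
Proof. by move=> /(_ [:: SOut SOk; SIn SNil])[_ [+ _]]; apply; apply: smust_out_ok_in_nil. Qed.

Lemma correct_not_blocking_BP_in k (IS : lstate k) wout win b :
  correct IS wout win -> ~ has_blocking_type IS wout win b (BP (btype_idx b)).
Proof.
move=> /correct_lmust_out_in must [/blocking_type_block[pre1 B1] /blocking_type_BP[pre2 [B2 pre2j]]].
exact: blocking_deadlock B1 B2 pre2j (Permutation_refl _) must.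
Qed.

Lemma correct_not_blocking_BP_out k (IS : lstate k) wout win b :
  correct IS wout win -> ~ has_blocking_type IS wout win (BP (btype_idx b)) b.
Proof.
move=> /correct_lmust_out_in must [/blocking_type_BP[pre1 [B1 pre1j]] /blocking_type_block[pre2 B2]].
exact: blocking_deadlock B2 B1 pre1j (perm_swap _ _ _) must.
Qed.

Theorem proposition5p10 (IS : 'I_2 -> bool) (wout win : list (lsym 2)) :
  correct IS wout win ->
  ~ has_blocking_type IS wout win (BPP ord0) (BP ord0) /\
  ~ has_blocking_type IS wout win (BP ord0) (BPP ord0) /\
  ~ has_blocking_type IS wout win (BP ord0) (BP ord0).
Proof.
move=> correct_tau; split; last split.
- exact: correct_not_blocking_BP_in (BPP ord0) correct_tau.
- exact: correct_not_blocking_BP_out (BPP ord0) correct_tau.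
- exact: correct_not_blocking_BP_in (BP ord0) correct_tau.
Qed.
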